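(* Let $n\ge 2$ and $k\ge 1$. There is no deterministic exploration algorithm that, knowing $n$ and $k$, having unlimited memory, but having no information on (any upper bound on) the system period $p$, solves PVG-Exploration of every feasible anonymous homogeneous PV graph with $n$ sites and $k$ carriers. In other words, in anonymous systems, PVG-Exploration is unsolvable without knowledge of an upper bound on the period, even when restricted to homogeneous systems.
   Context: A PV (periodically varying) system consists of a finite set $S$ of $n$ sites and a set $C$ of $k\le n$ carriers. Each carrier $c$ has a distinct identifier and a route $\pi(c)=\langle x_0,\dots,x_{p(c)-1}\rangle$, a finite sequence of sites (repetitions allowed) of length $p(c)\ge 1$ called its period; for any integer $j$, $\pi(c)[j]$ denotes $x_{j \bmod p(c)}$. At each time $t\in\mathbb{N}$ carrier $c$ is at site $\pi(c)[t]$ and moves to $\pi(c)[t+1]$ (it activates the edge $(\pi(c)[t],\pi(c)[t+1])$ at time $t$). The PV graph $\vec G_R$ (for $R=\{\pi(c):c\in C\}$) is the directed edge-labelled multigraph on $S$ with edges $(x_i,x_{i+1},i)$, $0\le i<p(c)$ (indices mod $p(c)$), for every carrier $c$. Let $p=\max_{c}p(c)$. The system/graph is homogeneous if all carriers have the same period and heterogeneous otherwise. Sites are either anonymous (indistinguishable to the agent) or have distinct identifiers. An exploring agent is injected at time $0$ at a site of $\mathrm{start}(\vec G_R)=\{\pi(c)[0]:c\in C\}$. If at time $t$ the agent is at site $x$, it must either choose a carrier $c$ with $\pi(c)[t]=x$ and ride with it to $\pi(c)[t+1]$ (one move, arriving at time $t+1$), or halt and exit the system; it cannot wait at a site. At each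 time the agent observes the identifiers of the carriers present at its current site (and, in systems with ids, the identifier of the site). An exploration algorithm is a deterministic rule mapping the agent's a priori knowledge and history of observations to its next action; its execution from injection site $x$ determines a walk $\xi(x)$. A walk is a concrete cover if it visits every site of $S$. An algorithm solves PVG-Exploration of $\vec G_R$ if for every injection site $x\in\mathrm{start}(\vec G_R)$ the walk $\xi(x)$ is finite (the agent halts) and is a concrete cover. $\vec G_R$ is feasible if from the starting point of every carrier there exists a walk realizable by the agent (riding carriers and switching between carriers that are at the same site at the same time) that is a concrete cover. *)

From mathcomp Require Import all_boot.
Set Implicit Arguments. Unset Strict Implicit. Unset Printing Implicit Defensive.

(* A PV system with sites 'I_n and carriers 'I_k.  The route of carrier c is
   the nonempty sequence  (R c).1 :: (R c).2  of sites; its period is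
   p(c) = (size (R c).2).+1 >= 1. *)
Definition routes (n k : nat) := 'I_k -> 'I_n * seq 'I_n.

Definition route n k (R : routes n k) (c : 'I_k) : seq 'I_n := (R c).1 :: (R c).2.
Definition period n k (R : routes n k) (c : 'I_k) : nat := size (route R c).

Definition pos n k (R : routes n k) (c : 'I_k) (t : nat) : 'I_n :=
  nth (R c).1 (route R c) (t %% period R c).

Definition homogeneous n k (R : routes n k) : Prop :=
  exists p, forall c, period R c = p.

Definition start n k (R : routes n k) (x : 'I_n) : Prop := exists c, pos R c 0 = x.

(* feasibility: from the start of every carrier there is a finite realizable
   walk (riding carriers, switching only between co-located carriers at the
   same time) visiting every site. *)
Definition feasible n k (R : routes n k) : Prop :=
  forall c, exists (T : nat) (w : nat -> 'I_n),
    w 0 = pos R c 0 /\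
    (forall t, t < T -> exists c', pos R c' t = w t /\ pos R c' t.+1 = w t.+1) /\
    (forall s : 'I_n, exists t, t <= T /\ w t = s).

(* Anonymous sites: at time t at site x the agent observes only the set of
   carriers present. *)
Definition obs n k (R : routes n k) (t : nat) (x : 'I_n) : {set 'I_k} :=
  [set c | pos R c t == x].

(* A deterministic exploration algorithm (unlimited memory): it maps the whole
   history of observations (times 0..t) to an action: Some c = ride carrier c,
   None = halt. It may depend on n and k (quantified before it), but not on R. *)
Definition Alg (k : nat) := seq {set 'I_k} -> option 'I_k.

(* Configuration at time t: current site and history of observations at times
   < t.  None = the agent has halted or attempted an illegal move. *)
Fixpoint cfg n k (A : Alg k) (R : routes n k) (x : 'I_n) (t : nat)
  : option ('I_n * seq {set 'I_k}) :=
  match t with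
  | 0 => Some (x, [::])
  | t'.+1 =>
    match cfg A R x t' with
    | None => None
    | Some (y, h) =>
      let h' := rcons h (obs R t' y) in
      match A h' with
      | None => None
      | Some c => if pos R c t' == y then Some (pos R c t'.+1, h') else None
      end
    end
  end.

(* The walk from x is finite (the agent halts at some time T, all moves before
   being legal) and is a concrete cover. *)
Definition solves_from n k (A : Alg k) (R : routes n k) (x : 'I_n) : Prop :=
  exists T y h,
    cfg A R x T = Some (y, h) /\ A (rcons h (obs R T y)) = None /\
    forall s : 'I_n, exists t, t <= T /\ exists h', cfg A R x t = Some (s, h').

Definition solves n k (A : Alg k) (R : routes n k) : Prop :=
  forall x, start R x -> solves_from A R x.

From mathcomp Require Import all_boot.
Set Implicit Arguments. Unset Strict Implicit. Unset Printing Implicit Defensive.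

(* The adversary uses "convoys": systems in which all k carriers follow one
   and the same route.  At every time the agent then sees all carriers at its
   site, so its history after t steps is always t copies of the full carrier
   set, whatever the route is.  Hence a deterministic algorithm A behaves
   identically in every convoy: it halts at the first time T such that
   A (T+1 full observations) = None, and until then it rides along the route.

   The lazy route of waiting time P stays at site 0 during times 0..P and
   then tours all other sites; its convoy is homogeneous and feasible.  If A
   explored the lazy convoy with P = 0, it halts at some time T; in the lazy
   convoy with P = T + 1 it halts at the same time T while still at site 0,
   so it never visits site 1. *)

Definition convoy (n k : nat) (r : 'I_n * seq 'I_n) : routes n k := fun _ => r.
Arguments convoy {n} k r.

(* A halts at time T when fed only full observations of k carriers, and not
   before: this is the halting time of A in any convoy. *)
Definition blind_halting_time k (A : Alg k) (T : nat) : Prop :=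
  A (nseq T.+1 setT) = None /\ forall u, u < T -> A (nseq u.+1 setT) <> None.

Lemma blind_halting_time_unique k (A : Alg k) T1 T2 :
  blind_halting_time A T1 -> blind_halting_time A T2 -> T1 = T2.
Proof.
move=> [halt1 run1] [halt2 run2].
by case: (ltngtP T1 T2) => // [/run2 | /run1].
Qed.

Lemma rcons_nseq (T : Type) (x : T) t : rcons (nseq t x) x = nseq t.+1 x.
Proof. by elim: t => //= t ->. Qed.

Section Convoy.

Variables (n k : nat) (r : 'I_n * seq 'I_n).
Let R : routes n k := convoy k r.

Lemma convoy_homogeneous : homogeneous R.
Proof. by exists (size (r.1 :: r.2)). Qed.

(* Riding any single carrier for one period visits its whole route. *)
Lemma convoy_feasible : (forall s, s \in r.1 :: r.2) -> feasible R.
Proof.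
move=> covers c; exists (size (r.1 :: r.2)), (pos R c); split=> //; split.
  by move=> t _; exists c.
move=> s; exists (index s (r.1 :: r.2)).
have lt_idx : index s (r.1 :: r.2) < size (r.1 :: r.2) by rewrite index_mem.
split; first exact: ltnW.
by rewrite /pos /period /route /= modn_small ?nth_index.
Qed.

Lemma convoy_obs c t : obs R t (pos R c t) = setT.
Proof. by apply/setP=> c'; rewrite !inE; apply/eqP. Qed.

Variables (A : Alg k) (c0 : 'I_k).

Lemma convoy_cfg t y h :
  cfg A R r.1 t = Some (y, h) ->
  [/\ forall u, u < t -> A (nseq u.+1 setT) <> None,
      y = pos R c0 t & h = nseq t setT].
Proof.
elim: t y h => [|t IH] y h /=.
  by case=> <- <-; split=> //; rewrite /pos mod0n.
case E: (cfg A R r.1 t) => [[y' h']|] //.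
have [run_before -> ->] := IH _ _ E.
rewrite convoy_obs rcons_nseq.
case halt_t: (A _) => [c|] //; case: ifP => // _ [<- <-].
split=> // u; rewrite ltnS leq_eqVlt => /orP[/eqP-> | /run_before //].
by rewrite halt_t.
Qed.

Lemma convoy_solves_from :
  solves_from A R r.1 ->
  exists T, blind_halting_time A T /\
            forall s, exists t, t <= T /\ pos R c0 t = s.
Proof.
move=> [T [y [h [run_T [halt_T covers]]]]].
have [run_before y_pos h_full] := convoy_cfg run_T.
rewrite y_pos h_full convoy_obs rcons_nseq in halt_T.
exists T; split=> //.
move=> s; have [t [le_tT [h' run_t]]] := covers s.
by have [_ s_pos _] := convoy_cfg run_t; exists t.
Qed.

Lemma convoy_start : start R r.1.
Proof. by exists c0; rewrite /pos mod0n. Qed.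

End Convoy.

Definition lazy_route m P : 'I_m.+2 * seq 'I_m.+2 :=
  (ord0, nseq P ord0 ++ map inord (iota 1 m.+1)).

Lemma lazy_route_covers m P s : s \in (lazy_route m P).1 :: (lazy_route m P).2.
Proof.
have on_tour : s != ord0 -> val s \in iota 1 m.+1.
  by rewrite mem_iota ltn_ord lt0n andbT.
rewrite in_cons mem_cat; case: (eqVneq s ord0) => // /on_tour s_on_tour.
by rewrite -{2}[s]inord_val map_f ?orbT.
Qed.

Lemma lazy_route_waits m k P (c : 'I_k) t :
  t <= P -> pos (convoy k (lazy_route m P)) c t = ord0.
Proof.
move=> le_tP; rewrite /pos /period /route /= modn_small; last first.
  by rewrite size_cat size_nseq ltnS (leq_trans le_tP) // leq_addr.
case: t le_tP => [|t] //= lt_tP.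
by rewrite nth_cat size_nseq lt_tP nth_nseq lt_tP.
Qed.

Theorem mainTheorem1 (n k : nat) (hn : 2 <= n) (hk : 1 <= k) (hkn : k <= n) :
  ~ exists A : Alg k,
      forall R : routes n k, homogeneous R -> feasible R -> solves A R.
Proof.
case: n hn hkn => [|[|m]] // _ _ [A explores].
pose c0 : 'I_k := Ordinal hk.
have explores_lazy P : solves_from A (convoy k (lazy_route m P)) ord0.
  apply: explores; [exact: convoy_homogeneous | | exact: convoy_start c0].
  exact/convoy_feasible/lazy_route_covers.
have [T1 [halt1 _]] := convoy_solves_from c0 (explores_lazy 0).
have [T2 [halt2 covers2]] := convoy_solves_from c0 (explores_lazy T1.+1).
have eq_T : T2 = T1 := blind_halting_time_unique halt2 halt1.
have [t [le_tT2 at_site1]] := covers2 (inord 1).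
have : inord 1 = ord0 :> 'I_m.+2.
  by rewrite -at_site1 lazy_route_waits // (leq_trans le_tT2) // eq_T.
by move/(congr1 val); rewrite /= inordK.
Qed.
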